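(* Let $\gamma_X = (X, d_X)$ and $\gamma_Y = (Y, d_Y)$ be two dynamic metric spaces. Then for any $k \in \mathbb{Z}_{\geq 0}$ and $n \in \mathbb{N}$, \[ d_H\left(D_k^n(\gamma_X), D_k^n(\gamma_Y)\right) \leq 2 \cdot d_{\mathrm{dyn}}(\gamma_X, \gamma_Y). \]
   Context: A dynamic metric space (DMS) $\gamma_X = (X, d_X(\cdot))$ is a finite set $X$ with a function $d_X : \mathbb{R} \times X \times X \to \mathbb{R}_{\geq 0}$ such that each $d_X(t)$ is a pseudometric and each $t \mapsto d_X(t)(x,x')$ is continuous. For $S \subseteq X$, $\gamma_S = (S, d_X|_S)$. For a compact interval $I$, $d_X(I)(x,x') := \inf_{t\in I} d_X(t)(x,x')$. For a semimetric $d$ and $\delta \ge 0$, $\mathcal{R}_\delta(d)$ is the simplicial complex whose simplices are finite nonempty $\sigma$ with $d(x,y)\le\delta$ for all $x,y\in\sigma$. $\mathbf{Dyn}$ is the poset of pairs $(I,\delta)$ ($I=[a,b]$ compact interval, $\delta\ge0$) with $(I,\delta)\le(I',\delta')$ iff $I\subseteq I'$ and $\delta\le\delta'$; $\mathcal{R}^{\mathrm{lev}}(\gamma_X)(I,\delta) = \mathcal{R}_\delta(d_X(I))$ with inclusions, and $H_k$ is simplicial homology over a fixed field. Curvature set: $K_n(\gamma_X) = \{\gamma_S : S \subseteq X, |S| \le n\}$; persistence set: $D_k^n(\gamma_X) = \{H_k(\mathcal{R}^{\mathrm{lev}}(\gamma_S)) : \gamma_S \in K_n(\gamma_X)\}$.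 For $\varepsilon \ge 0$ and $([a,b],\delta)\in\mathbf{Dyn}$ let $([a,b],\delta)^{\varepsilon} = ([a-\varepsilon,b+\varepsilon],\delta+\varepsilon)$. Two modules $\mathbb{V},\mathbb{W}:\mathbf{Dyn}\to\mathbf{Vec}$ are $\varepsilon$-interleaved if there are natural families $f_p:\mathbb{V}(p)\to\mathbb{W}(p^\varepsilon)$, $g_p:\mathbb{W}(p)\to\mathbb{V}(p^\varepsilon)$ with $g_{p^\varepsilon}\circ f_p = \mathbb{V}(p\le p^{2\varepsilon})$ and $f_{p^\varepsilon}\circ g_p=\mathbb{W}(p\le p^{2\varepsilon})$; the interleaving distance $d_I^{\mathbf{Vec}}$ is the infimum of such $\varepsilon$. $d_H$ is the Hausdorff distance between sets of modules induced by $d_I^{\mathbf{Vec}}$: $d_H(P,Q) = \max\{\sup_{\mathbb{V}\in P}\inf_{\mathbb{W}\in Q} d_I^{\mathbf{Vec}}(\mathbb{V},\mathbb{W}), \sup_{\mathbb{W}\in Q}\inf_{\mathbb{V}\in P} d_I^{\mathbf{Vec}}(\mathbb{V},\mathbb{W})\}$. The distance $d_{\mathrm{dyn}}$: a tripod between sets $X,Y$ is a set $Z$ with surjections $\varphi_X:Z\to X$, $\varphi_Y:Z\to Y$. For $t\in\mathbb{R}$, $\varepsilon>0$, $(\bigvee_{[t-\varepsilon,t+\varepsilon]} d_X)(x,x') := \min_{t'\in[t-\varepsilon,t+\varepsilon]} d_X(t')(x,x')$. The tripod is a $(2,\varepsilon)$-tripod if for all $t$ and all $z,z'\in Z$: $(\bigvee_{[t-\varepsilon,t+\varepsilon]}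 d_X)(\varphi_X z,\varphi_X z') \le d_Y(t)(\varphi_Y z,\varphi_Y z') + 2\varepsilon$ and $(\bigvee_{[t-\varepsilon,t+\varepsilon]} d_Y)(\varphi_Y z,\varphi_Y z') \le d_X(t)(\varphi_X z,\varphi_X z') + 2\varepsilon$. Its distortion is the infimum of such $\varepsilon>0$, and $d_{\mathrm{dyn}}(\gamma_X,\gamma_Y)$ is the infimum of distortions over all tripods. *)

From HB Require Import structures.
From mathcomp Require Import all_boot all_order all_algebra.
From mathcomp Require Import all_classical all_reals all_analysis.
Set Implicit Arguments. Unset Strict Implicit. Unset Printing Implicit Defensive.
Import Order.TTheory GRing.Theory Num.Theory.
Import numFieldNormedType.Exports.
Local Open Scope classical_set_scope.
Local Open Scope ring_scope.

Definition is_dms (R : realType) (X : finType) (d : R -> X -> X -> R) : Prop :=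
  [/\ (forall t x y, 0 <= d t x y),
      (forall t x, d t x x = 0),
      (forall t x y, d t x y = d t y x),
      (forall t x y z, d t x z <= d t x y + d t y z) &
      (forall x y, continuous (fun t : R => d t x y))].

Definition dist_int (R : realType) (X : finType) (d : R -> X -> X -> R)
    (a b : R) (x y : X) : R :=
  inf [set d t x y | t in [set t : R | a <= t <= b]].

(* Filtered complexes indexed by Dyn = {([a,b], delta)}: a complex is a
   predicate on (finite) subsets of the vertex type. *)
Definition filt (R : realType) (T : finType) := R -> R -> R -> {set T} -> Prop.

(* R^lev(gamma_S)([a,b],delta) = R_delta(d_X([a,b])|_S): nonempty finite
   sigma contained in S whose points are pairwise within delta. *)
Definition rips (R : realType) (X : finType) (d : R -> X -> X -> R)
    (S : {set X}) : filt R X :=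
  fun a b delta s =>
    [/\ s != finset.set0, s \subset S &
        forall x y, x \in s -> y \in s -> dist_int d a b x y <= delta].

Section Homology.
Variable F : fieldType.

Definition chain (T : finType) := {set T} -> F.

(* orientation: vertices ordered by enum_rank; sign of the face s \ v *)
Definition sgn (T : finType) (v : T) (s : {set T}) : F :=
  (-1) ^+ #|[set u in s | (enum_rank u < enum_rank v)%N]|.

(* simplicial boundary operator (non-augmented: no face on the empty set) *)
Definition bd (T : finType) (c : chain T) : chain T :=
  fun tau => if tau == finset.set0 then 0
             else \sum_(v in ~: tau) sgn v (v |: tau) * c (v |: tau).

(* k-chains of the complex K (k-simplices have k+1 vertices) *)
Definition is_chain (T : finType) (K : {set T} -> Prop) (k : nat) (c : chain T) :=
  forall s, c s != 0 -> K s /\ #|s| = k.+1.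

Definition is_cycle (T : finType) (K : {set T} -> Prop) (k : nat) (c : chain T) :=
  is_chain K k c /\ forall s, bd c s = 0.

Definition is_boundary (T : finType) (K : {set T} -> Prop) (k : nat) (c : chain T) :=
  exists b, is_chain K k.+1 b /\ forall s, c s = bd b s.

Definition homologous (T : finType) (K : {set T} -> Prop) (k : nat) (c c' : chain T) :=
  is_boundary K k (fun s => c s - c' s).

Definition is_linear (T1 T2 : finType) (f : chain T1 -> chain T2) :=
  forall (a : F) (u v : chain T1),
    f (fun s => a * u s + v s) = (fun s => a * f u s + f v s).

(* A linear map H_k(K1 p) -> H_k(K2 p^e) is represented by a linear      *)
(* map on chains sending cycles to cycles and boundaries to boundaries  *)
(* (every linear map of homology lifts this way, over a field).          *)
(* p = ([a,b],dl) with a <= b, 0 <= dl; p^e = ([a-e,b+e], dl+e);          *)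
(* p <= q iff [a,b] \subset [a',b'] and dl <= dl'.                        *)
Variable R : realType.

Definition hom_family (T1 T2 : finType) (K1 : filt R T1) (K2 : filt R T2)
    (k : nat) (e : R) (f : R -> R -> R -> chain T1 -> chain T2) : Prop :=
  forall a b dl, a <= b -> 0 <= dl ->
   [/\ is_linear (f a b dl),
       (forall z, is_cycle (K1 a b dl) k z ->
                  is_cycle (K2 (a - e) (b + e) (dl + e)) k (f a b dl z)),
       (forall z, is_boundary (K1 a b dl) k z ->
                  is_boundary (K2 (a - e) (b + e) (dl + e)) k (f a b dl z)) &
       (* naturality: f_q o V(p <= q) = W(p^e <= q^e) o f_p *)
       (forall a' b' dl', a' <= a -> b <= b' -> dl <= dl' ->
          forall z, is_cycle (K1 a b dl) k z ->
            homologous (K2 (a' - e) (b' + e) (dl' + e)) k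
                       (f a' b' dl' z) (f a b dl z))].

Definition interleaved (T1 T2 : finType) (K1 : filt R T1) (K2 : filt R T2)
    (k : nat) (e : R) : Prop :=
  exists f g,
   [/\ hom_family K1 K2 k e f,
       hom_family K2 K1 k e g,
       (* g_{p^e} o f_p = V(p <= p^{2e}) *)
       (forall a b dl, a <= b -> 0 <= dl -> forall z, is_cycle (K1 a b dl) k z ->
          homologous (K1 (a - 2 * e) (b + 2 * e) (dl + 2 * e)) k
             (g (a - e) (b + e) (dl + e) (f a b dl z)) z) &
       (* f_{p^e} o g_p = W(p <= p^{2e}) *)
       (forall a b dl, a <= b -> 0 <= dl -> forall z, is_cycle (K2 a b dl) k z ->
          homologous (K2 (a - 2 * e) (b + 2 * e) (dl + 2 * e)) k
             (f (a - e) (b + e) (dl + e) (g a b dl z)) z)].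

Definition dI (T1 T2 : finType) (K1 : filt R T1) (K2 : filt R T2) (k : nat) : \bar R :=
  ereal_inf [set e%:E | e in [set e : R | 0 <= e /\ interleaved K1 K2 k e]].

(* Hausdorff distance between the persistence sets
   D_k^n(gamma_X) = { H_k(R^lev(gamma_S)) : S \subset X, |S| <= n } and
   D_k^n(gamma_Y). *)
Definition dH_pers (X Y : finType) (dX : R -> X -> X -> R) (dY : R -> Y -> Y -> R)
    (k n : nat) : \bar R :=
  maxe
   (ereal_sup [set ereal_inf [set dI (rips dX S) (rips dY S') k
                              | S' in [set S' : {set Y} | (#|S'| <= n)%N]]
              | S in [set S : {set X} | (#|S| <= n)%N]])
   (ereal_sup [set ereal_inf [set dI (rips dX S) (rips dY S') k
                              | S in [set S : {set X} | (#|S| <= n)%N]]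
              | S' in [set S' : {set Y} | (#|S'| <= n)%N]]).

End Homology.

Section Ddyn.
Variable R : realType.

Definition vee (X : finType) (d : R -> X -> X -> R) (t e : R) (x y : X) : R :=
  inf [set d t' x y | t' in [set t' : R | t - e <= t' <= t + e]].

Definition is_2_tripod (X Y : finType) (Z : Type)
    (dX : R -> X -> X -> R) (dY : R -> Y -> Y -> R)
    (pX : Z -> X) (pY : Z -> Y) (e : R) : Prop :=
  forall (t : R) (z z' : Z),
    vee dX t e (pX z) (pX z') <= dY t (pY z) (pY z') + 2 * e /\
    vee dY t e (pY z) (pY z') <= dX t (pX z) (pX z') + 2 * e.

Definition distortion (X Y : finType) (Z : Type)
    (dX : R -> X -> X -> R) (dY : R -> Y -> Y -> R)
    (pX : Z -> X) (pY : Z -> Y) : \bar R :=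
  ereal_inf [set e%:E | e in [set e : R | 0 < e /\ is_2_tripod dX dY pX pY e]].

Definition d_dyn (X Y : finType) (dX : R -> X -> X -> R) (dY : R -> Y -> Y -> R)
    : \bar R :=
  ereal_inf [set D | exists (Z : Type) (pX : Z -> X) (pY : Z -> Y),
     [/\ (forall x, exists z, pX z = x), (forall y, exists z, pY z = y) &
         D = distortion dX dY pX pY]].

End Ddyn.

(* Lifting each [x] through a tripod satisfying the [(2, e)] condition gives
   [phi : X -> Y] that, once the time interval is widened by [e], changes interval
   distances by at most [2 e] in either direction.  It then suffices to show that
   [rips dX S] and [rips dY (phi @: S)] are [2 e]-interleaved.
   Let [psi] be a section of [phi] over [phi @: S], with image [reps].  The forward
   map collapses each vertex [x] of [S] outside [reps] onto [psi (phi x)], one at a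
   time, then relabels along [psi]; the backward map relabels along [phi], which is
   injective on [reps].  Relabelling along an injective map commutes with the
   boundary once orientations are corrected by the sign of the induced
   permutation.  Forward after backward is the identity; backward after forward is
   the collapse, chain homotopic to the identity through cone homotopies, whose
   cones are simplices [4 e] later since [x] and [psi (phi x)] have the same image
   under [phi]. *)

From mathcomp Require Import all_boot all_order all_algebra.
From mathcomp Require Import all_classical all_reals all_analysis.
(* Re-imported so that the [finset] lemma names shadow their [classical_sets]
   homonyms. *)
From mathcomp Require Import fintype finset.
From mathcomp Require Import ring lra.
Set Implicit Arguments. Unset Strict Implicit. Unset Printing Implicit Defensive.
Import Order.TTheory GRing.Theory Num.Theory.
Local Open Scope ring_scope.

Lemma linear_comp (F : fieldType) (T1 T2 T3 : finType)
    (f : chain F T1 -> chain F T2) (g : chain F T2 -> chain F T3) :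
  is_linear f -> is_linear g -> is_linear (g \o f).
Proof. by move=> lf lg a u v; rewrite /= lf lg. Qed.

Lemma linear0 (F : fieldType) (T1 T2 : finType) (f : chain F T1 -> chain F T2) :
  is_linear f -> f (fun _ => 0) = (fun _ => 0).
Proof.
move=> lf; have := lf (-1) (fun _ => 0) (fun _ => 0).
rewrite (_ : (fun _ => -1 * 0 + 0) = (fun _ => 0)); last first.
  by apply: funext => s; rewrite mulr0 addr0.
by move=> ->; apply: funext => s; rewrite mulN1r addNr.
Qed.

Section Boundary.
Variables (F : fieldType) (T : finType).
Implicit Types (s t : {set T}) (c d : chain F T) (u v w : T).

Definition rank_lt (u v : T) := (enum_rank u < enum_rank v)%N.

Lemma rank_ltxx u : rank_lt u u = false.
Proof. exact: ltnn. Qed.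

Lemma rank_ltN u v : u != v -> rank_lt u v = ~~ rank_lt v u.
Proof.
move=> uv; rewrite /rank_lt ltn_neqAle -leqNgt.
suff -> : enum_rank u != enum_rank v by [].
by apply: contra uv => /eqP /enum_rank_inj ->.
Qed.

Lemma sign_rank_lt_neq u v : u != v ->
  (-1) ^+ rank_lt u v * (-1) ^+ rank_lt v u = -1 :> F.
Proof. by move=> /rank_ltN ->; case: rank_lt; rewrite ?expr1 ?expr0 ?mulr1 ?mul1r. Qed.

Lemma sgnE v s : sgn F v s = \prod_(u in s) (-1) ^+ rank_lt u v.
Proof.
rewrite (eq_bigr (fun u => if rank_lt u v then -1 else 1)); last first.
  by move=> u _; case: rank_lt; rewrite ?expr1 ?expr0.
rewrite -big_mkcondr prodr_const; congr (_ ^+ _).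
by apply: eq_card => u; rewrite !inE.
Qed.

Lemma sgnU1 u w s : w \notin s -> sgn F u (w |: s) = (-1) ^+ rank_lt w u * sgn F u s.
Proof. by move=> ws; rewrite !sgnE big_setU1. Qed.

Lemma sgn_setU1_self u s : sgn F u (u |: s) = sgn F u s.
Proof.
have [us|us] := boolP (u \in s); first by rewrite (setUidPr _) // sub1set.
by rewrite sgnU1 // rank_ltxx mul1r.
Qed.

Lemma sgnD1 u w s : w \in s -> sgn F u s = (-1) ^+ rank_lt w u * sgn F u (s :\ w).
Proof. by move=> ws; rewrite -{1}(setD1K ws) sgnU1 // setD11. Qed.

Lemma mul_sgnn u s : sgn F u s * sgn F u s = 1.
Proof. by rewrite -expr2 sqrr_sign. Qed.

Lemma bd_is_linear : is_linear (@bd F T).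
Proof.
move=> a c d; apply: funext => t; rewrite /bd; case: ifP => _; first by rewrite mulr0 addr0.
by rewrite mulr_sumr -big_split; apply: eq_bigr => w _ /=; ring.
Qed.

Lemma bdD c d t : bd (fun s => c s + d s) t = bd c t + bd d t.
Proof.
have := congr1 (@^~ t) (bd_is_linear 1 c d); rewrite mul1r => <-.
by congr bd; apply: funext => s; rewrite mul1r.
Qed.

Lemma sum_signed_sym (P : pred T) (G : T -> T -> F) : (forall v w, G v w = G w v) ->
  \sum_(v | P v) \sum_(w | P w && (w != v)) (-1) ^+ rank_lt v w * G v w = 0.
Proof.
move=> Gs; pose A v w := if rank_lt v w then G v w else 0.
transitivity (\sum_(v | P v) \sum_(w | P w) (- A v w + A w v)).
  apply: eq_bigr => v Pv; rewrite [RHS](bigID (fun w => w != v)) /=.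
  rewrite [X in _ = _ + X]big1 ?addr0; last first.
    by move=> w /andP[_]; rewrite negbK => /eqP ->; rewrite /A rank_ltxx oppr0 addr0.
  apply: eq_bigr => w /andP[_ wv]; rewrite /A (rank_ltN (u := v)) 1?eq_sym //.
  by case: rank_lt; rewrite /= ?expr1 ?expr0 ?mulN1r ?mul1r ?oppr0 ?add0r ?addr0 // Gs.
under eq_bigr => v _ do rewrite big_split /= sumrN.
by rewrite big_split /= sumrN [X in _ + X]exchange_big /= addrC subrr.
Qed.

(* Each [c (w |: v |: t)] enters [bd (bd c) t] twice, once for each order of
   adding [v] and [w], with opposite signs. *)
Lemma bd_bd c t : bd (bd c) t = 0.
Proof.
rewrite /bd; case: ifP => // t0.
transitivity (\sum_(v in ~: t) \sum_(w | (w \in ~: t) && (w != v))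
   (-1) ^+ rank_lt v w * (sgn F v t * sgn F w t * c (w |: (v |: t)))).
  apply: eq_bigr => v; rewrite inE => vt.
  rewrite ifF; last by apply/negbTE/set0Pn; exists v; rewrite setU11.
  rewrite mulr_sumr; apply: eq_big => [w|w]; first by rewrite !inE negb_or andbC.
  rewrite !inE negb_or => /andP[wv wt].
  by rewrite sgn_setU1_self (sgn_setU1_self w) sgnU1 //; ring.
by apply: sum_signed_sym => v w; rewrite setUCA; ring.
Qed.

Lemma bd_setD1 c t u : u \in t -> t :\ u != set0 ->
  bd c (t :\ u) = sgn F u t * c t + \sum_(i in ~: t) sgn F i (i |: t :\ u) * c (i |: t :\ u).
Proof.
move=> ut /negbTE t0; rewrite /bd t0.
have uin : u \in ~: (t :\ u) by rewrite !inE eqxx.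
rewrite (bigD1 u uin) /= (setD1K ut).
congr (_ + _); apply: eq_bigl => w.
change ((w \in ~: (t :\ u)) && (w != u) = (w \in ~: t)); rewrite !inE negb_and negbK.
by case: (eqVneq w u) => [->|]; rewrite ?ut //= andbT.
Qed.

End Boundary.

Section Chains.
Variables (F : fieldType) (T : finType) (K : {set T} -> Prop) (k : nat).
Implicit Types (c d : chain F T).

Lemma homologous_eqfun c d : c =1 d -> homologous K k c d.
Proof.
move=> cd; exists (fun _ => 0); split=> [s|s]; first by rewrite eqxx.
by rewrite cd subrr (linear0 (@bd_is_linear F T)).
Qed.

Lemma is_boundaryD c d : is_boundary K k c -> is_boundary K k d ->
  is_boundary K k (fun s => c s + d s).
Proof.
move=> [bc [Hbc Ec]] [bd' [Hbd Ed]]; exists (fun s => bc s + bd' s); split.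
  move=> s H; have [E|/Hbc //] := eqVneq (bc s) 0.
  by apply: Hbd; move: H; rewrite E add0r.
by move=> s; rewrite bdD Ec Ed.
Qed.

End Chains.

Section Collapse.
Variables (F : fieldType) (T : finType) (x x0 : T).
Hypothesis xx0 : x != x0.
Implicit Types (s t : {set T}) (c : chain F T).

(* The chain map of the vertex collapse [x |-> x0], written as
   [id + bd h + h bd] for the cone homotopy [h], so that it is chain
   homotopic to the identity by construction. *)
Definition collapse_htpy c : chain F T := fun u =>
  if (x \in u) && (x0 \in u) then - (sgn F x0 u * c (u :\ x0)) else 0.

Definition collapse c : chain F T :=
  fun t => c t + bd (collapse_htpy c) t + collapse_htpy (bd c) t.

Lemma collapse_htpy_is_linear : is_linear collapse_htpy.
Proof. by move=> a c d; apply: funext => t; rewrite /collapse_htpy; case: ifP => _; ring. Qed.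

Lemma collapse_is_linear : is_linear collapse.
Proof.
move=> a c d; apply: funext => t.
rewrite /collapse collapse_htpy_is_linear !bd_is_linear collapse_htpy_is_linear.
by ring.
Qed.

Lemma collapse_htpy_neq0 c u : collapse_htpy c u != 0 ->
  [/\ x \in u, x0 \in u & c (u :\ x0) != 0].
Proof.
rewrite /collapse_htpy; case: ifP => [/andP[-> ->] H|]; last by rewrite eqxx.
by split => //; apply: contra H => /eqP ->; rewrite mulr0 oppr0.
Qed.

Lemma bd_collapse_htpy_mem c t : x \in t -> x0 \in t ->
  bd (collapse_htpy c) t =
  sgn F x0 t * \sum_(i in ~: t) sgn F i (i |: t :\ x0) * c (i |: t :\ x0).
Proof.
move=> xt x0t; rewrite /bd ifF; last by apply/negbTE/set0Pn; exists x.
rewrite mulr_sumr; apply: eq_bigr => v; rewrite inE => vt.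
have vx0 : v != x0 by apply: contraNneq vt => ->.
rewrite /collapse_htpy !inE xt x0t !orbT /=.
have -> : (v |: t) :\ x0 = v |: (t :\ x0).
  by apply/setP => w; rewrite !inE; case: (eqVneq w v) => [->|] //=; rewrite vx0.
rewrite sgn_setU1_self (sgn_setU1_self _ v) (sgnD1 _ v x0t) (sgnU1 _ _ vt).
have := sign_rank_lt_neq F vx0 => E.
transitivity (- ((-1) ^+ rank_lt v x0 * (-1) ^+ rank_lt x0 v) *
  (sgn F x0 t * (sgn F v (t :\ x0) * c (v |: t :\ x0)))); first ring.
by rewrite E opprK mul1r.
Qed.

Lemma collapse_eq0 c t : x \in t -> collapse c t = 0.
Proof.
move=> xt; rewrite /collapse.
have [x0t|x0t] := boolP (x0 \in t).
  have t0 : t :\ x0 != set0 by apply/set0Pn; exists x; rewrite !inE xt andbT.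
  rewrite bd_collapse_htpy_mem // /collapse_htpy xt x0t /= bd_setD1 //.
  by rewrite mulrDr mulrA mul_sgnn; ring.
have -> : collapse_htpy (bd c) t = 0 by rewrite /collapse_htpy (negbTE x0t) andbF.
rewrite addr0 /bd ifF; last by apply/negbTE/set0Pn; exists x.
have x0in : x0 \in ~: t by rewrite inE.
rewrite (bigD1 x0 x0in) /= big1 ?addr0.
  rewrite /collapse_htpy setU11 !inE xt orbT /= (setU1K x0t) sgn_setU1_self.
  by rewrite mulrN mulrA mul_sgnn; ring.
move=> v /andP[vt vx0]; rewrite /collapse_htpy !inE (eq_sym x0) (negbTE vx0) (negbTE x0t) /=.
by rewrite andbF mulr0.
Qed.

Lemma collapse_eq0_notin c t : x \notin t -> c t = 0 ->
  (x0 \in t -> c ((x |: t) :\ x0) = 0) -> collapse c t = 0.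
Proof.
move=> xt ct cxt; rewrite /collapse ct add0r.
have -> : collapse_htpy (bd c) t = 0 by rewrite /collapse_htpy (negbTE xt).
rewrite addr0 /bd; case: ifP => // _; apply: big1 => v; rewrite inE => vt.
rewrite /collapse_htpy; case: ifP => [/andP[]|]; last by rewrite mulr0.
rewrite !inE (negbTE xt) orbF => /eqP vx; subst v.
by rewrite eq_sym (negbTE xx0) /= => x0t; rewrite cxt // mulr0 oppr0 mulr0.
Qed.

Lemma collapse_id c : (forall s, x \in s -> c s = 0) -> collapse c = c.
Proof.
move=> cx; have h0 : collapse_htpy c = (fun _ => 0).
  apply: funext => u; rewrite /collapse_htpy; case: ifP => // /andP[xu _].
  by rewrite cx ?mulr0 ?oppr0 // in_setD1 xx0.
apply: funext => t; rewrite /collapse h0 (linear0 (@bd_is_linear F T)) addr0.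
rewrite /collapse_htpy; case: ifP => [/andP[xt _]|]; last by rewrite addr0.
rewrite /bd; case: ifP => _; first by rewrite mulr0 oppr0 addr0.
rewrite big1 ?mulr0 ?oppr0 ?addr0 // => w _; rewrite cx ?mulr0 //.
by rewrite !inE eq_sym xx0 xt orbT.
Qed.

Lemma collapse_bd c : collapse (bd c) = bd (collapse c).
Proof.
apply: funext => t; rewrite /collapse bdD bdD bd_bd.
suff -> : collapse_htpy (bd (bd c)) t = 0 by rewrite !addr0.
by rewrite /collapse_htpy; case: ifP => // _; rewrite bd_bd mulr0 oppr0.
Qed.

Lemma collapse_cycle c t : (forall s, bd c s = 0) ->
  collapse c t - c t = bd (collapse_htpy c) t.
Proof.
move=> bc; rewrite /collapse.
suff -> : collapse_htpy (bd c) t = 0 by ring.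
by rewrite /collapse_htpy; case: ifP => // _; rewrite bc mulr0 oppr0.
Qed.

Lemma collapse_neq0 c t : collapse c t != 0 ->
  x \notin t /\ (c t != 0 \/ (x0 \in t /\ c ((x |: t) :\ x0) != 0)).
Proof.
move=> H; have xt : x \notin t by apply: contra H => xt; rewrite collapse_eq0.
split=> //; have [ct|] := eqVneq (c t) 0; last by left.
right; have [x0t|x0t] := boolP (x0 \in t).
  by split=> //; apply: contra H => /eqP cx; apply/eqP/collapse_eq0_notin.
by case/negP: H; apply/eqP/collapse_eq0_notin => // /(negP x0t).
Qed.

Lemma collapse_htpy_chain (P Q : {set T} -> Prop) k c :
  (forall s, P s -> x \in s -> Q (x0 |: s)) ->
  is_chain P k c -> is_chain Q k.+1 (collapse_htpy c).
Proof.
move=> HQ Hc u /collapse_htpy_neq0 [xu x0u /Hc [Ps cs]].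
have xs : x \in u :\ x0 by rewrite !inE xu andbT.
split; first by have := HQ _ Ps xs; rewrite setD1K.
by have := cardsD1 x0 u; rewrite x0u cs add1n.
Qed.

Lemma collapse_homologous (P Q : {set T} -> Prop) k c :
  (forall s, P s -> x \in s -> Q (x0 |: s)) ->
  is_cycle P k c -> homologous Q k (collapse c) c.
Proof.
move=> HQ [Hc bc]; exists (collapse_htpy c); split; first exact: collapse_htpy_chain Hc.
by move=> t; apply: collapse_cycle.
Qed.

End Collapse.

Section Relabel.
Variables (F : fieldType) (T1 T2 : finType).
Implicit Types (m : T2 -> T1) (D t : {set T2}) (c : chain F T1).

(* Relabelling by [m] changes the orientation of a simplex by the sign of
   the permutation of its vertices that [m] induces on the [enum_rank] orders. *)
Definition inversion_sign m t : F :=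
  \prod_(u in t) \prod_(w in t) (-1) ^+ (rank_lt u w && rank_lt (m w) (m u)).

Definition relabel m D c : chain F T2 :=
  fun t => if t \subset D then inversion_sign m t * c (m @: t) else 0.

Lemma relabel_is_linear m D : is_linear (relabel m D).
Proof. by move=> a c d; apply: funext => t; rewrite /relabel; case: ifP => _; ring. Qed.

Lemma relabel_neq0 m D c t : relabel m D c t != 0 -> t \subset D /\ c (m @: t) != 0.
Proof.
rewrite /relabel; case: ifP => [tD H|_]; last by rewrite eqxx.
by split => //; apply: contra H => /eqP ->; rewrite mulr0.
Qed.

Lemma inversion_signU1 m v t : v \notin t -> inversion_sign m (v |: t) =
  inversion_sign m t * \prod_(u in t) ((-1) ^+ (rank_lt u v && rank_lt (m v) (m u)) *
                                       (-1) ^+ (rank_lt v u && rank_lt (m u) (m v))).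
Proof.
move=> vt; rewrite /inversion_sign big_setU1 //=.
under [X in _ * X = _]eq_bigr => u _ do rewrite big_setU1 //=.
by rewrite big_split /= big_split /= (big_setU1 _ vt) /= rank_ltxx /=; ring.
Qed.

Lemma sgn_inversion_signU1 m v t : v \notin t -> {in v |: t &, injective m} ->
  sgn F v t * inversion_sign m (v |: t) = inversion_sign m t * sgn F (m v) (m @: t).
Proof.
move=> vt minj; have tinj : {in t &, injective m}.
  by move=> u w ut wt; apply: minj; rewrite inE ?ut ?wt orbT.
rewrite inversion_signU1 // !sgnE big_imset //= mulrCA -big_split /=; congr (_ * _).
apply: eq_bigr => u ut; have uv : u != v by apply: contraNneq vt => <-.
have muv : m u != m v by apply: contra uv => /eqP /minj ->; rewrite ?inE ?ut ?eqxx ?orbT.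
rewrite (rank_ltN (u := v)) 1?eq_sym // (rank_ltN (u := m v)) 1?eq_sym //.
by case: rank_lt; case: rank_lt; rewrite /= ?expr1 ?expr0 ?mulr1 ?mul1r ?mulrNN ?mulr1.
Qed.

Variables (m : T2 -> T1) (D : {set T2}).
Hypothesis m_inj : {in D &, injective m}.

Lemma bd_relabel_sum c t : t != set0 ->
  bd (relabel m D c) t = \sum_(v in D :\: t) sgn F v (v |: t) * relabel m D c (v |: t).
Proof.
move=> /negbTE t0; rewrite /bd t0 (bigID (mem D)) /= [X in _ + X]big1 ?addr0.
  by apply: eq_bigl => v; rewrite !inE andbC.
move=> v /andP[_ vD]; rewrite /relabel ifF ?mulr0 //; apply/negbTE.
by apply: contra vD => /subsetP; apply; apply: setU11.
Qed.

Lemma bd_imset_sum c t : t \subset D -> t != set0 ->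
  (forall s, c s != 0 -> s \subset m @: D) ->
  bd c (m @: t) = \sum_(v in D :\: t) sgn F (m v) (m v |: m @: t) * c (m v |: m @: t).
Proof.
move=> tD t0 csupp; rewrite /bd ifF; last first.
  by have [u ut] := set0Pn _ t0; apply/negbTE/set0Pn; exists (m u); apply: imset_f.
rewrite (bigID (mem (m @: D))) /= [X in _ + X]big1 ?addr0; last first.
  move=> w /andP[_ wD]; rewrite (_ : c _ = 0) ?mulr0 //; apply/eqP.
  by apply: contraNT wD => /csupp /subsetP; apply; apply: setU11.
rewrite (eq_bigl (mem (m @: (D :\: t)))); last first.
  move=> w; rewrite inE; apply/andP/imsetP.
    case=> wt /imsetP[v vD wv]; exists v => //; rewrite inE vD andbT.
    by apply: contra wt => vt; rewrite wv; apply: imset_f.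
  case=> v; rewrite inE => /andP[vt vD] ->; split; last exact: imset_f.
  apply/imsetP => -[u ut] /m_inj; rewrite vD => /(_ isT (subsetP tD u ut)) vu.
  by move: vt; rewrite vu ut.
by rewrite big_imset // => u w; rewrite !inE => /andP[_ uD] /andP[_ wD]; apply: m_inj.
Qed.

Lemma relabel_bd c t : (forall s, c s != 0 -> s \subset m @: D) ->
  bd (relabel m D c) t = relabel m D (bd c) t.
Proof.
move=> csupp; rewrite [RHS]/relabel.
have [tD|tD] := boolP (t \subset D); last first.
  rewrite /bd; case: ifP => // _; apply: big1 => v _.
  rewrite /relabel ifF ?mulr0 //; apply/negbTE; apply: contra tD.
  exact: subset_trans (subsetU1 v t).
have [->|t0] := eqVneq t set0; first by rewrite /bd imset0 !eqxx mulr0.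
rewrite bd_relabel_sum // bd_imset_sum // mulr_sumr.
apply: eq_bigr => v; rewrite inE => /andP[vt vD].
have vtD : v |: t \subset D by rewrite subUset sub1set vD tD.
rewrite /relabel vtD imsetU1 !sgn_setU1_self mulrA sgn_inversion_signU1 //; first ring.
by move=> u w /(subsetP vtD) uD /(subsetP vtD) wD; apply: m_inj.
Qed.

End Relabel.

Lemma relabelK (F : fieldType) (T1 T2 : finType) (m : T1 -> T2) (m' : T2 -> T1)
    (D : {set T1}) (D' : {set T2}) (c : chain F T1) :
  (forall u, u \in D -> m u \in D' /\ m' (m u) = u) ->
  (forall s, c s != 0 -> s \subset D) ->
  relabel m D (relabel m' D' c) = c.
Proof.
move=> mD csupp; apply: funext => s; rewrite /relabel.
have [sD|sD] := boolP (s \subset D); last by apply/esym/eqP; apply: contraNT sD => /csupp.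
have mK u : u \in s -> m' (m u) = u by move=> /(subsetP sD) /mD [].
have minj : {in s &, injective m} by move=> u w us ws muw; rewrite -(mK u) // muw mK.
rewrite ifT; last by apply/subsetP => _ /imsetP[u /(subsetP sD) /mD [] ? _ ->].
have -> : m' @: (m @: s) = s.
  rewrite -imset_comp; apply/setP => u; apply/imsetP/idP => [[w ws ->]|us].
    by rewrite /= mK.
  by exists u => //=; rewrite mK.
rewrite mulrA -[RHS]mul1r; congr (_ * _).
rewrite /inversion_sign big_imset //=.
under [X in _ * X]eq_bigr => u us do rewrite big_imset //=.
under [X in _ * X]eq_bigr => u us do under eq_bigr => w ws do rewrite !mK //.
rewrite [X in X * _]exchange_big /= -big_split /=.
by apply: big1 => u _; rewrite -big_split /=; apply: big1 => w _; rewrite andbC -expr2 sqrr_sign.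
Qed.

Lemma card_setU1D1 (T : finType) (b x0 : T) (t : {set T}) : b \notin t -> x0 \in t ->
  #|(b |: t) :\ x0| = #|t|.
Proof.
move=> bt x0t; have x0in : x0 \in b |: t by rewrite !inE x0t orbT.
by have := cardsD1 x0 (b |: t); rewrite x0in cardsU1 bt add1n => -[].
Qed.

Section CollapseSeq.
Variables (F : fieldType) (T : finType) (r : T -> T) (moved : pred T).
Hypothesis moved_neq_r : forall b, moved b -> b != r b.
Hypothesis r_unmoved : forall b, moved b -> ~~ moved (r b).
Implicit Types (l : seq T) (s t : {set T}) (c : chain F T) (P Q : {set T} -> Prop).

Fixpoint collapse_seq l c : chain F T :=
  if l is b :: l' then collapse b (r b) (collapse_seq l' c) else c.

Lemma collapse_seq_is_linear l : is_linear (collapse_seq l).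
Proof. by elim: l => [//|b l IH] a c d /=; rewrite IH collapse_is_linear. Qed.

Lemma collapse_seq_bd l c : collapse_seq l (bd c) = bd (collapse_seq l c).
Proof. by elim: l => [//|b l IH] /=; rewrite IH collapse_bd. Qed.

Lemma collapse_seq_id l c : all moved l ->
  (forall s b, b \in l -> b \in s -> c s = 0) -> collapse_seq l c = c.
Proof.
elim: l => [//|b l IH] /= /andP[bm lm] Hc.
rewrite IH //; last by move=> s b' b'l; apply: Hc; rewrite inE b'l orbT.
by apply: (collapse_id (moved_neq_r bm)) => s; apply: Hc (mem_head _ _).
Qed.

Lemma collapse_seq_notin l c t b : all moved l -> b \in l ->
  collapse_seq l c t != 0 -> b \notin t.
Proof.
elim: l t => [//|b0 l IH] t /= /andP[b0m lm] bl.
move=> /(collapse_neq0 (moved_neq_r b0m)) [b0t H].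
move: bl; rewrite inE => /orP[/eqP -> //|bl].
have {}IH t' : collapse_seq l c t' != 0 -> b \notin t' := IH t' lm bl.
case: H => [/IH -> //|[rt /IH]].
apply: contra => bt; rewrite !inE bt orbT andbT.
by apply: contraTneq bl => ->; apply: contraNN (r_unmoved b0m); apply: (allP lm).
Qed.

Lemma collapse_seq_chain P k l c : all moved l ->
  (forall b t, moved b -> b \notin t -> r b \in t -> P ((b |: t) :\ r b) -> P t) ->
  is_chain P k c -> is_chain P k (collapse_seq l c).
Proof.
move=> + HP Hc; elim: l => [//|b l IH] /= /andP[bm /IH {}IH].
move=> t /(collapse_neq0 (moved_neq_r bm)) [bt [/IH //|[rt /IH [Ps cs]]]].
by split; [apply: HP Ps | rewrite -cs card_setU1D1].
Qed.

Lemma collapse_seq_homologous P Q k l c : all moved l ->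
  (forall b t, moved b -> b \notin t -> r b \in t -> P ((b |: t) :\ r b) -> P t) ->
  (forall b s, moved b -> P s -> b \in s -> Q (r b |: s)) ->
  is_cycle P k c -> homologous Q k (collapse_seq l c) c.
Proof.
move=> + HP HQ [Hc bc]; elim: l => [|b l IH] /=; first by move=> _; apply: homologous_eqfun.
move=> /andP[bm lm]; have cyc : is_cycle P k (collapse_seq l c).
  split; first exact: collapse_seq_chain HP Hc.
  move=> s; rewrite -collapse_seq_bd (_ : bd c = fun _ => 0); last exact: funext.
  by rewrite (linear0 (collapse_seq_is_linear l)).
have : homologous Q k (collapse b (r b) (collapse_seq l c)) (collapse_seq l c).
  by apply: (collapse_homologous (moved_neq_r bm) _ cyc) => s; apply: HQ.
move=> /(is_boundaryD (IH lm)); congr is_boundary; apply: funext => s; ring.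
Qed.

End CollapseSeq.

Section IntervalDistance.
Variables (R : realType) (X : finType) (d : R -> X -> X -> R).
Hypothesis d_ge0 : forall t x y, 0 <= d t x y.

Lemma has_lbound_dist_int a b x y : has_lbound [set d t x y | t in [set t : R | a <= t <= b]].
Proof. by exists 0 => _ [t _ <-]. Qed.

Lemma dist_int_le a b t x y : a <= t <= b -> dist_int d a b x y <= d t x y.
Proof. by move=> tab; apply: (ge_inf (has_lbound_dist_int a b x y)); exists t. Qed.

Lemma dist_int_approx a b x y eta : a <= b -> 0 < eta ->
  exists2 t, a <= t <= b & d t x y < dist_int d a b x y + eta.
Proof.
move=> ab eta0.
have [|_ [t tab <-] H] :=
  inf_adherent eta0 (E := [set d t x y | t in [set t : R | a <= t <= b]]).
  split; last exact: has_lbound_dist_int.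
  by exists (d a x y); exists a => //; apply/andP; split.
by exists t.
Qed.

Lemma le_dist_int a b a' b' x y : a' <= a -> a <= b -> b <= b' ->
  dist_int d a' b' x y <= dist_int d a b x y.
Proof.
move=> a'a ab bb'; apply/ler_addgt0Pr => eta eta0.
have [t /andP[a_t t_b] H] := dist_int_approx x y ab eta0.
by apply: le_trans (ltW H); apply: dist_int_le; rewrite (le_trans a'a a_t) (le_trans t_b bb').
Qed.

End IntervalDistance.

Lemma dist_int_vee_le (R : realType) (X Y : finType) (dX : R -> X -> X -> R)
    (dY : R -> Y -> Y -> R) (e a b : R) x x' y y' :
  (forall t x y, 0 <= dX t x y) -> (forall t x y, 0 <= dY t x y) -> 0 <= e -> a <= b ->
  (forall t, vee dY t e y y' <= dX t x x' + 2 * e) ->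
  dist_int dY (a - e) (b + e) y y' <= dist_int dX a b x x' + 2 * e.
Proof.
move=> hX hY e0 ab H; apply/ler_addgt0Pr => eta eta0.
have [t /andP[a_t t_b] Ht] := dist_int_approx hX x x' ab eta0.
have := H t; rewrite /vee -/(dist_int dY (t - e) (t + e) y y') => Hv.
have : dist_int dY (a - e) (b + e) y y' <= dist_int dY (t - e) (t + e) y y'.
  by apply: (le_dist_int hY); lra.
lra.
Qed.

Lemma rips_subset (R : realType) (X : finType) (d : R -> X -> X -> R) S a b dl
    (s t : {set X}) :
  rips d S a b dl s -> t != set0 -> t \subset s -> rips d S a b dl t.
Proof.
move=> [s0 sS sd] t0 ts; split => //; first exact: subset_trans ts sS.
by move=> x y xt yt; apply: sd; apply: (subsetP ts).
Qed.

Lemma interleaved_sym (R : realType) (F : fieldType) (T1 T2 : finType)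
    (K1 : filt R T1) (K2 : filt R T2) k e :
  interleaved F K1 K2 k e -> interleaved F K2 K1 k e.
Proof. by move=> [f [g [hf hg H1 H2]]]; exists g, f; split. Qed.

Lemma dI_le (R : realType) (F : fieldType) (T1 T2 : finType) (K1 : filt R T1)
    (K2 : filt R T2) k (e : R) :
  0 <= e -> interleaved F K1 K2 k e -> (dI F K1 K2 k <= e%:E)%E.
Proof. by move=> e0 H; apply: ge_ereal_inf; exists e%:E => //; exists e. Qed.

Lemma hom_family_const (R : realType) (F : fieldType) (T1 T2 : finType)
    (K1 : filt R T1) (K2 : filt R T2) (k : nat) (e : R) (f : chain F T1 -> chain F T2) :
  is_linear f ->
  (forall a b dl j c, a <= b -> is_chain (K1 a b dl) j c ->
     is_chain (K2 (a - e) (b + e) (dl + e)) j (f c)) ->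
  (forall a b dl j c, a <= b -> is_chain (K1 a b dl) j c -> bd (f c) = f (bd c)) ->
  hom_family K1 K2 k e (fun _ _ _ => f).
Proof.
move=> lf fchain fbd a b dl ab _; split=> //.
- move=> z [zc zb]; split; first exact: fchain zc.
  move=> s; rewrite (fbd _ _ _ _ _ ab zc) (_ : bd z = fun _ => 0) ?(linear0 lf) //.
  exact: funext.
- move=> z [c [cc zc]]; exists (f c); split; first exact: fchain cc.
  by move=> s; rewrite (fbd _ _ _ _ _ ab cc) (_ : z = bd c) //; apply: funext.
- by move=> *; apply: homologous_eqfun.
Qed.

Section ImageInterleaving.
Variables (R : realType) (F : fieldType) (X Y : finType).
Variables (dX : R -> X -> X -> R) (dY : R -> Y -> Y -> R).
Hypotheses (dX_ge0 : forall t x y, 0 <= dX t x y) (dY_ge0 : forall t x y, 0 <= dY t x y).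
Variables (phi : X -> Y) (e : R).
Hypothesis e_ge0 : 0 <= e.
Hypothesis phi_le : forall (a b : R) x x', a <= b ->
  dist_int dY (a - e) (b + e) (phi x) (phi x') <= dist_int dX a b x x' + 2 * e.
Hypothesis phi_ge : forall (a b : R) x x', a <= b ->
  dist_int dX (a - e) (b + e) x x' <= dist_int dY a b (phi x) (phi x') + 2 * e.
Variables (S : {set X}) (psi : Y -> X).
Hypothesis psiK : forall y, y \in phi @: S -> psi y \in S /\ phi (psi y) = y.
Implicit Types (a b dl : R) (s t : {set X}).

Local Notation S' := (phi @: S).

Definition reps := psi @: S'.
Definition retr x := psi (phi x).
Definition unreps := [pred x | x \in S :\: reps].

Lemma reps_sub : reps \subset S.
Proof. by apply/subsetP => _ /imsetP[y /psiK [] ? _ ->]. Qed.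

Lemma retr_id x : x \in reps -> retr x = x.
Proof. by move=> /imsetP[y /psiK [_ py] ->]; rewrite /retr py. Qed.

Lemma phi_retr x : x \in S -> phi (retr x) = phi x.
Proof. by move=> xS; have [] := psiK (imset_f phi xS). Qed.

Lemma retr_reps x : x \in S -> retr x \in reps.
Proof. by move=> xS; apply: imset_f; apply: imset_f. Qed.

Lemma unreps_neq_retr x : unreps x -> x != retr x.
Proof.
by rewrite /unreps /= !inE => /andP[xA xS]; apply: contraNneq xA => ->; apply: retr_reps.
Qed.

Lemma retr_unreps x : unreps x -> ~~ unreps (retr x).
Proof. by rewrite /unreps /= !inE => /andP[_ xS]; rewrite retr_reps. Qed.

Lemma psi_inj : {in S' &, injective psi}.
Proof. by move=> y y' /psiK [_ py] /psiK [_ py'] E; rewrite -py -py' E. Qed.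

Lemma phi_inj : {in reps &, injective phi}.
Proof. by move=> u u' uA u'A E; rewrite -(retr_id uA) -(retr_id u'A) /retr E. Qed.

Lemma dist_int_phi_le a b dl x x' : a <= b -> dist_int dX a b x x' <= dl ->
  dist_int dY (a - 2 * e) (b + 2 * e) (phi x) (phi x') <= dl + 2 * e.
Proof.
move=> ab H; have e0 := e_ge0; have := phi_le x x' ab.
have : dist_int dY (a - 2 * e) (b + 2 * e) (phi x) (phi x') <=
       dist_int dY (a - e) (b + e) (phi x) (phi x') by apply: (le_dist_int dY_ge0); lra.
lra.
Qed.

Lemma dist_int_le_phi a b dl u u' : a <= b -> dist_int dY a b (phi u) (phi u') <= dl ->
  dist_int dX (a - 2 * e) (b + 2 * e) u u' <= dl + 2 * e.
Proof.
move=> ab H; have e0 := e_ge0; have := phi_ge u u' ab.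
have : dist_int dX (a - 2 * e) (b + 2 * e) u u' <= dist_int dX (a - e) (b + e) u u'.
  by apply: (le_dist_int dX_ge0); lra.
lra.
Qed.

Lemma dist_int_phi_eq a b dl x x' u u' : a <= b -> dist_int dX a b x x' <= dl ->
  phi u = phi x -> phi u' = phi x' ->
  dist_int dX (a - 2 * (2 * e)) (b + 2 * (2 * e)) u u' <= dl + 2 * (2 * e).
Proof.
move=> ab /(dist_int_phi_le ab) H pu pu'; rewrite -pu -pu' in H; have e0 := e_ge0.
have /dist_int_le_phi/(_ H) : a - 2 * e <= b + 2 * e by lra.
have -> : a - 2 * e - 2 * e = a - 2 * (2 * e) by ring.
have -> : b + 2 * e + 2 * e = b + 2 * (2 * e) by ring.
by have -> : dl + 2 * e + 2 * e = dl + 2 * (2 * e) by ring.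
Qed.

(* Every simplex met while collapsing a cycle of [rips dX S] at [([a, b], dl)]
   onto [reps] is admissible: together with its image under [retr] it spans a
   simplex four [e] later, and its image under [phi] is a simplex two [e] later. *)
Definition admissible a b dl s :=
  rips dX S (a - 2 * (2 * e)) (b + 2 * (2 * e)) (dl + 2 * (2 * e)) (s :|: retr @: s) /\
  rips dY S' (a - 2 * e) (b + 2 * e) (dl + 2 * e) (phi @: s).

Lemma rips_admissible a b dl s : a <= b -> rips dX S a b dl s -> admissible a b dl s.
Proof.
move=> ab [s0 sS sd]; have [x1 x1s] := set0Pn _ s0.
have src u : u \in s :|: retr @: s -> exists2 x, x \in s & phi u = phi x.
  rewrite in_setU => /orP[us|/imsetP[x xs ->]]; first by exists u.
  by exists x => //; apply: phi_retr (subsetP sS x xs).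
split; split.
- by apply/set0Pn; exists x1; rewrite in_setU x1s.
- rewrite subUset sS /=; apply/subsetP => _ /imsetP[x xs ->].
  exact: (subsetP reps_sub) (retr_reps (subsetP sS x xs)).
- by move=> u u' /src[x xs pu] /src[x' x's pu']; apply: dist_int_phi_eq pu pu' => //; apply: sd.
- by apply/set0Pn; exists (phi x1); apply: imset_f.
- exact: imsetS.
- by move=> _ _ /imsetP[x xs ->] /imsetP[x' x's ->]; apply: dist_int_phi_le => //; apply: sd.
Qed.

Lemma admissible_sub a b dl s : admissible a b dl s -> s \subset S.
Proof. by move=> [[_ H _] _]; apply: subset_trans H; apply: subsetUl. Qed.

Lemma admissible_uncollapse a b dl x t : unreps x -> x \notin t -> retr x \in t ->
  admissible a b dl ((x |: t) :\ retr x) -> admissible a b dl t.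
Proof.
move=> xm xt rt [G1 G2]; have xS : x \in S by move: xm; rewrite /unreps /= !inE => /andP[].
have xr := unreps_neq_retr xm.
have rr : retr (retr x) = retr x by apply/retr_id/retr_reps.
have xt' : x \in (x |: t) :\ retr x by rewrite !inE eqxx andbT.
have tr w : w \in t -> w = retr x \/ w \in (x |: t) :\ retr x.
  by move=> wt; case: (eqVneq w (retr x)) => [|wr]; [left | right; rewrite !inE wr wt orbT].
split.
- apply: (rips_subset G1); first by apply/set0Pn; exists (retr x); rewrite in_setU rt.
  apply/subsetP => u; rewrite in_setU => /orP[/tr [->|ut]|/imsetP[w /tr [->|wt] ->]].
  + by rewrite in_setU; apply/orP; right; apply: imset_f.
  + by rewrite in_setU ut.
  + by rewrite rr in_setU; apply/orP; right; apply: imset_f.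
  + by rewrite in_setU; apply/orP; right; apply: imset_f.
- apply: (rips_subset G2); first by apply/set0Pn; exists (phi (retr x)); apply: imset_f.
  apply/subsetP => _ /imsetP[w /tr [->|wt] ->]; last exact: imset_f.
  by rewrite phi_retr //; apply: imset_f.
Qed.

Lemma admissible_cone a b dl x s : admissible a b dl s -> x \in s ->
  rips dX S (a - 2 * (2 * e)) (b + 2 * (2 * e)) (dl + 2 * (2 * e)) (retr x |: s).
Proof.
move=> [G1 _] xs; apply: (rips_subset G1); first by apply/set0Pn; exists (retr x); apply: setU11.
by rewrite subUset subsetUl andbT sub1set in_setU imset_f ?orbT.
Qed.

Definition collapse_unreps (c : chain F X) := collapse_seq retr (enum (S :\: reps)) c.
Definition to_image (c : chain F X) : chain F Y := relabel psi S' (collapse_unreps c).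
Definition from_image (w : chain F Y) : chain F X := relabel phi reps w.

Lemma all_unreps_enum : all unreps (enum (S :\: reps)).
Proof. by apply/allP => x; rewrite mem_enum. Qed.

Lemma collapse_unreps_chain a b dl k c : a <= b -> is_chain (rips dX S a b dl) k c ->
  is_chain (admissible a b dl) k (collapse_unreps c).
Proof.
move=> ab cc; apply: (collapse_seq_chain unreps_neq_retr all_unreps_enum).
  by move=> x t xm; apply: admissible_uncollapse.
by move=> s /cc [Hs ->]; split => //; apply: rips_admissible.
Qed.

Lemma collapse_unreps_supp a b dl k c t : a <= b -> is_chain (rips dX S a b dl) k c ->
  collapse_unreps c t != 0 -> t \subset reps.
Proof.
move=> ab cc ct; apply/subsetP => u ut; apply: contraT => uA.
have [/admissible_sub/subsetP/(_ u ut) uS _] := collapse_unreps_chain ab cc ct.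
have ul : u \in enum (S :\: reps) by rewrite mem_enum !inE uA uS.
by move: (collapse_seq_notin unreps_neq_retr retr_unreps all_unreps_enum ul ct); rewrite ut.
Qed.

Lemma to_image_chain a b dl k c : a <= b -> is_chain (rips dX S a b dl) k c ->
  is_chain (rips dY S' (a - 2 * e) (b + 2 * e) (dl + 2 * e)) k (to_image c).
Proof.
move=> ab cc t /relabel_neq0 [tS /[dup] ct /(collapse_unreps_chain ab cc) [[_ G2] sz]].
have tinj : {in t &, injective psi} by move=> u w /(subsetP tS) ut /(subsetP tS); apply: psi_inj.
have E : phi @: (psi @: t) = t.
  rewrite -imset_comp; apply/setP => y; apply/imsetP/idP => [[u ut ->] /=|yt].
    by have [_ ->] := psiK (subsetP tS u ut).
  by exists y => //=; have [_ ->] := psiK (subsetP tS y yt).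
by rewrite E in G2; split => //; rewrite -sz card_in_imset.
Qed.

Lemma from_image_chain a b dl k w : a <= b -> is_chain (rips dY S' a b dl) k w ->
  is_chain (rips dX S (a - 2 * e) (b + 2 * e) (dl + 2 * e)) k (from_image w).
Proof.
move=> ab wc s /relabel_neq0 [sA /wc [[s0 sS sd] sz]].
have sinj : {in s &, injective phi} by move=> u v /(subsetP sA) us /(subsetP sA); apply: phi_inj.
split; last by rewrite -sz card_in_imset.
split; first by apply: contraNneq s0 => ->; rewrite imset0.
  exact: subset_trans sA reps_sub.
by move=> u u' us u's; apply: dist_int_le_phi => //; apply: sd; apply: imset_f.
Qed.

Lemma to_image_bd a b dl k c : a <= b -> is_chain (rips dX S a b dl) k c ->
  bd (to_image c) = to_image (bd c).
Proof.
move=> ab cc; apply: funext => t; rewrite /to_image /collapse_unreps collapse_seq_bd.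
by rewrite relabel_bd //; [exact: psi_inj | move=> s /(collapse_unreps_supp ab cc)].
Qed.

Lemma from_image_bd a b dl k w : is_chain (rips dY S' a b dl) k w ->
  bd (from_image w) = from_image (bd w).
Proof.
move=> wc; apply: funext => t; rewrite relabel_bd //; first exact: phi_inj.
move=> s /wc [[_ sS _] _]; apply: subset_trans sS _; apply/subsetP => y /imsetP[x xS ->].
by apply/imsetP; exists (retr x); rewrite ?retr_reps ?phi_retr.
Qed.

Lemma to_imageK (w : chain F Y) :
  (forall s : {set Y}, w s != 0 -> s \subset S') -> to_image (from_image w) = w.
Proof.
move=> wsupp; rewrite /to_image /collapse_unreps.
rewrite (collapse_seq_id unreps_neq_retr all_unreps_enum).
  by apply: relabelK => // y yS; split; [apply: imset_f | have [] := psiK yS].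
move=> s x; rewrite mem_enum !inE => /andP[xA _] xs.
rewrite /from_image /relabel ifF //; apply/negbTE; apply: contra xA.
by move=> /subsetP; apply.
Qed.

Lemma from_image_to_image a b dl k c : a <= b -> is_chain (rips dX S a b dl) k c ->
  from_image (to_image c) = collapse_unreps c.
Proof.
move=> ab cc; apply: relabelK; last by move=> s /(collapse_unreps_supp ab cc).
by move=> u uA; split; [apply: imset_f; apply: (subsetP reps_sub) | apply: retr_id].
Qed.

Lemma rips_image_interleaved k : interleaved F (rips dX S) (rips dY S') k (2 * e).
Proof.
exists (fun _ _ _ => to_image), (fun _ _ _ => from_image); split.
- apply: hom_family_const => [||a b dl j c ab]; last exact: to_image_bd.
    exact: linear_comp (collapse_seq_is_linear (F := F) retr _) (relabel_is_linear _ _).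
  by move=> a b dl j c; apply: to_image_chain.
- apply: hom_family_const => [||a b dl j w _]; last exact: from_image_bd.
    exact: relabel_is_linear.
  by move=> a b dl j w; apply: from_image_chain.
- move=> a b dl ab _ z [zc zb] /=; rewrite (from_image_to_image ab zc).
  apply: (collapse_seq_homologous (P := admissible a b dl) unreps_neq_retr all_unreps_enum).
  + by move=> x t xm; apply: admissible_uncollapse.
  + by move=> x s _; apply: admissible_cone.
  + by split=> // s /zc [Hs ->]; split=> //; apply: rips_admissible.
- move=> a b dl _ _ w [wc _]; apply: homologous_eqfun => s.
  by rewrite to_imageK // => s' /wc [[_ ? _] _].
Qed.

End ImageInterleaving.

Lemma is_2_tripod_sym (R : realType) (X Y : finType) (Z : Type)
    (dX : R -> X -> X -> R) (dY : R -> Y -> Y -> R) (pX : Z -> X) (pY : Z -> Y) e :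
  is_2_tripod dX dY pX pY e -> is_2_tripod dY dX pY pX e.
Proof. by move=> tri t z z'; have [] := tri t z z'. Qed.

Lemma tripod_rips_interleaved (R : realType) (F : fieldType) (X Y : finType) (Z : Type)
    (dX : R -> X -> X -> R) (dY : R -> Y -> Y -> R) (pX : Z -> X) (pY : Z -> Y)
    (e : R) (k n : nat) :
  (forall t x y, 0 <= dX t x y) -> (forall t x y, 0 <= dY t x y) -> 0 <= e ->
  (forall x, exists z, pX z = x) -> (forall y, exists z, pY z = y) ->
  is_2_tripod dX dY pX pY e -> forall S : {set X}, (#|S| <= n)%N ->
  exists2 S' : {set Y}, (#|S'| <= n)%N & interleaved F (rips dX S) (rips dY S') k (2 * e).
Proof.
move=> hX hY e0 /choice[zx zxK] /choice[zy zyK] tri S Sn.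
pose phi x := pY (zx x).
pose psi y := odflt (pX (zy y)) [pick x in S | phi x == y].
exists (phi @: S); first exact: leq_trans (leq_imset_card _ _) Sn.
apply: (@rips_image_interleaved _ F _ _ _ _ hX hY phi e e0 _ _ S psi).
- move=> a b x x' ab; apply: dist_int_vee_le => // t.
  by have [_] := tri t (zx x) (zx x'); rewrite !zxK.
- move=> a b x x' ab; apply: dist_int_vee_le => // t.
  by have [+ _] := tri t (zx x) (zx x'); rewrite !zxK.
- move=> _ /imsetP[x xS ->]; rewrite /psi.
  by case: pickP => [x' /andP[x'S /eqP ->] //|/(_ x)]; rewrite xS eqxx.
Qed.

Lemma dH_pers_le_tripod (R : realType) (F : fieldType) (X Y : finType) (Z : Type)
    (dX : R -> X -> X -> R) (dY : R -> Y -> Y -> R) (pX : Z -> X) (pY : Z -> Y)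
    (e : R) (k n : nat) :
  (forall t x y, 0 <= dX t x y) -> (forall t x y, 0 <= dY t x y) -> 0 <= e ->
  (forall x, exists z, pX z = x) -> (forall y, exists z, pY z = y) ->
  is_2_tripod dX dY pX pY e -> (dH_pers F dX dY k n <= (2 * e)%:E)%E.
Proof.
move=> hX hY e0 sX sY tri; have e20 : 0 <= 2 * e by rewrite mulr_ge0.
rewrite /dH_pers ge_max; apply/andP; split.
- apply: ge_ereal_sup => _ [S /= Sn <-].
  have [S' S'n H] := tripod_rips_interleaved F k hX hY e0 sX sY tri Sn.
  by apply: ge_ereal_inf; exists (dI F (rips dX S) (rips dY S') k); [exists S' | exact: dI_le].
- apply: ge_ereal_sup => _ [S' /= S'n <-].
  have [S Sn H] := tripod_rips_interleaved F k hY hX e0 sY sX (is_2_tripod_sym tri) S'n.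
  apply: ge_ereal_inf; exists (dI F (rips dX S) (rips dY S') k); first by exists S.
  by apply: dI_le => //; apply: interleaved_sym.
Qed.

Theorem mainTheorem5 (R : realType) (F : fieldType) (X Y : finType)
    (dX : R -> X -> X -> R) (dY : R -> Y -> Y -> R) (k n : nat) :
  is_dms dX -> is_dms dY -> (0 < n)%N ->
  (dH_pers F dX dY k n <= 2%:E * d_dyn dX dY)%E.
Proof.
move=> [hX _ _ _ _] [hY _ _ _ _] _.
rewrite -lee_pdivrMl //; apply/ereal_infP => _ [Z [pX [pY [sX sY ->]]]].
apply/ereal_infP => _ [e [e0 tri] <-].
by rewrite lee_pdivrMl // -EFinM (dH_pers_le_tripod F k n hX hY (ltW e0) sX sY tri).
Qed.
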